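(* For every $\varepsilon>0$ there is $\gamma>0$ such that for every $\eta>0$ there exists $\delta>0$ such that for all $n>1/\delta$ and all $\mu\in\mathcal P(\Omega^n)$ the following holds. If $\mu$ is $(\delta,2)$-symmetric, then every $(\gamma,2)$-state $S$ of $\mu$ with $\mu(S)\ge\eta$ satisfies $\frac1n\sum_{x\in[n]}\|\mu_{\downarrow x}[\cdot|S]-\mu_{\downarrow x}\|_{TV}<\varepsilon$.
   Context: $\Omega$ is a fixed finite nonempty set, $\mathcal P(\mathcal X)$ the set of probability measures on a finite set $\mathcal X$, $\|\cdot\|_{TV}$ total variation. For $\mu\in\mathcal P(\Omega^n)$ and $S\subset\Omega^n$ with $\mu(S)>0$, $\mu[\cdot|S]$ is the conditional measure; for $x_1,\dots,x_k\in[n]$, $\mu_{\downarrow\{x_1,\dots,x_k\}}[\cdot|S]$ denotes the joint law of $(\boldsymbol\sigma(x_1),\dots,\boldsymbol\sigma(x_k))$ for $\boldsymbol\sigma\sim\mu[\cdot|S]$, $\mu_{\downarrow x}[\cdot|S]$ the law of $\boldsymbol\sigma(x)$, and $\mu_{\downarrow x}$ the law of $\boldsymbol\sigma(x)$ under $\mu$. A set $S\subset\Omega^n$ is an $(\varepsilon,k)$-state of $\mu$ if $\mu(S)>0$ and $\frac1{n^k}\sum_{x_1,\dots,x_k\in[n]}\|\mu_{\downarrow\{x_1,\dots,x_k\}}[\cdot|S]-\mu_{\downarrow x_1}[\cdot|S]\otimes\cdots\otimes\mu_{\downarrow x_k}[\cdot|S]\|_{TV}<\varepsilon$. The measure $\mu$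 is $(\varepsilon,k)$-symmetric if $\Omega^n$ itself is an $(\varepsilon,k)$-state of $\mu$. *)

From HB Require Import structures.
From mathcomp Require Import all_boot all_order all_algebra.
From mathcomp Require Import reals.
Set Implicit Arguments. Unset Strict Implicit. Unset Printing Implicit Defensive.
Import Order.TTheory GRing.Theory Num.Theory.
Local Open Scope ring_scope.

Section Defs.
Variables (R : realType) (Omega : finType).

Definition config (n : nat) := {ffun 'I_n -> Omega}.

Definition is_prob (T : finType) (mu : {ffun T -> R}) : Prop :=
  (forall t, 0 <= mu t) /\ \sum_t mu t = 1.

Definition prob (T : finType) (mu : {ffun T -> R}) (A : {set T}) : R :=
  \sum_(t in A) mu t.

Definition tv (T : finType) (p q : {ffun T -> R}) : R :=
  2^-1 * \sum_t `|p t - q t|.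

Definition cmarg (n k : nat) (mu : {ffun config n -> R}) (S : {set config n})
    (xs : {ffun 'I_k -> 'I_n}) : {ffun {ffun 'I_k -> Omega} -> R} :=
  [ffun a : {ffun 'I_k -> Omega} => prob mu (S :&: [set s : config n | [forall i, s (xs i) == a i]])
             / prob mu S].

Definition cmarg1 (n : nat) (mu : {ffun config n -> R}) (S : {set config n})
    (x : 'I_n) : {ffun Omega -> R} :=
  [ffun a => prob mu (S :&: [set s : config n | s x == a]) / prob mu S].

Definition cprod (n k : nat) (mu : {ffun config n -> R}) (S : {set config n})
    (xs : {ffun 'I_k -> 'I_n}) : {ffun {ffun 'I_k -> Omega} -> R} :=
  [ffun a : {ffun 'I_k -> Omega} => \prod_(i < k) cmarg1 mu S (xs i) (a i)].

Definition is_state (n : nat) (mu : {ffun config n -> R}) (S : {set config n})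
    (eps : R) (k : nat) : Prop :=
  0 < prob mu S /\
  (n%:R ^+ k)^-1 * \sum_(xs : {ffun 'I_k -> 'I_n}) tv (cmarg mu S xs) (cprod mu S xs)
    < eps.

Definition is_symmetric (n : nat) (mu : {ffun config n -> R}) (eps : R) (k : nat)
  : Prop := is_state mu [set: config n] eps k.

End Defs.

From HB Require Import structures.
From mathcomp Require Import all_boot all_order all_algebra.
From mathcomp Require Import reals.
From mathcomp Require Import ring lra.
Set Implicit Arguments. Unset Strict Implicit. Unset Printing Implicit Defensive.
Import Order.TTheory GRing.Theory Num.Theory.
Local Open Scope ring_scope.

(* Let [g x w] be the sign of [mu_x[w|S] - mu_x[w]] and [h s = \sum_x g x (s x)].
   Then twice the sum of the one-point distances is [E[h|S] - E[h]], and
   Steiner's formula gives [mu(S) (E[h|S] - E[h])^2 <= Var h].  Expanding [h^2]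
   over pairs of coordinates, [Var h] is at most twice the sum of the pair
   distances [||mu_{x,y} - mu_x (x) mu_y||], i.e. less than [2 delta n^2].  With
   [delta = eta eps^2] and [mu(S) >= eta] this yields the claim. *)

Section TotalVariation.
Variables (R : realType) (T : finType).

Lemma tv_sg (p q : {ffun T -> R}) :
  2 * tv p q = \sum_t (p t - q t) * Num.sg (p t - q t).
Proof.
rewrite /tv mulrA divff ?mul1r ?pnatr_eq0//.
by apply: eq_bigr => t _; rewrite normrEsg mulrC.
Qed.

Lemma sum_diff_mul_le_tv (p q : {ffun T -> R}) (G : T -> R) :
  (forall t, `|G t| <= 1) -> \sum_t (p t - q t) * G t <= 2 * tv p q.
Proof.
move=> G_le1; rewrite /tv mulrA divff ?mul1r ?pnatr_eq0//.
apply: ler_sum => t _; apply: le_trans (ler_norm _) _.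
by rewrite normrM ler_piMr.
Qed.

End TotalVariation.

Section Moments.
Variables (R : realType) (T : finType) (mu : {ffun T -> R}).
Hypothesis mu_prob : is_prob mu.

Definition expect (f : T -> R) : R := \sum_t mu t * f t.

Definition cexpect (S : {set T}) (f : T -> R) : R :=
  (\sum_(t in S) mu t * f t) / prob mu S.

Definition variance (f : T -> R) : R := \sum_t mu t * (f t - expect f) ^+ 2.

Lemma prob_setT : prob mu [set: T] = 1.
Proof.
by case: mu_prob => _ <-; apply: eq_bigl => t; rewrite inE.
Qed.

Lemma cexpect_setT (f : T -> R) : cexpect [set: T] f = expect f.
Proof.
by rewrite /cexpect prob_setT divr1; apply: eq_bigl => t; rewrite inE.
Qed.

Lemma cexpect_sum (I : finType) (S : {set T}) (F : I -> T -> R) :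
  cexpect S (fun t => \sum_i F i t) = \sum_i cexpect S (F i).
Proof.
rewrite /cexpect -mulr_suml exchange_big /=; congr (_ / _).
by apply: eq_bigr => t _; rewrite mulr_sumr.
Qed.

Lemma sum_pushforward_mul (U : finType) (pi : T -> U) (S : {set T}) (F : U -> R) :
  \sum_u prob mu (S :&: [set t | pi t == u]) / prob mu S * F u
  = cexpect S (F \o pi).
Proof.
rewrite /cexpect (partition_big pi xpredT) //= mulr_suml.
apply: eq_bigr => u _; rewrite /prob mulrAC mulr_suml; congr (_ * _).
apply: eq_big => t; first by rewrite !inE.
by rewrite !inE => /andP[_ /eqP ->].
Qed.

Lemma variance_expect_sqr (f : T -> R) :
  variance f = expect (fun t => f t ^+ 2) - expect f ^+ 2.
Proof.
case: mu_prob => _ mu1; rewrite /variance.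
transitivity (\sum_t (mu t * f t ^+ 2 - (expect f * 2) * (mu t * f t)
                      + expect f ^+ 2 * mu t)).
  by apply: eq_bigr => t _; ring.
by rewrite big_split sumrB /= -!mulr_sumr mu1 /expect; ring.
Qed.

Lemma sum_dev_sqr_cexpect (S : {set T}) (f : T -> R) (a : R) :
  0 < prob mu S ->
  \sum_(t in S) mu t * (f t - a) ^+ 2
  = \sum_(t in S) mu t * (f t - cexpect S f) ^+ 2
    + prob mu S * (cexpect S f - a) ^+ 2.
Proof.
move=> pS; set c := cexpect S f; set p := prob mu S.
have centred : \sum_(t in S) mu t * (f t - c) = 0.
  rewrite (eq_bigr (fun t => mu t * f t - c * mu t)); last by move=> t _; ring.
  by rewrite sumrB -mulr_sumr /c /cexpect -/p mulfVK ?subrr // gt_eqF.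
transitivity (\sum_(t in S) (mu t * (f t - c) ^+ 2
              + (2 * (c - a)) * (mu t * (f t - c)) + (c - a) ^+ 2 * mu t)).
  by apply: eq_bigr => t _; ring.
by rewrite !big_split /= -!mulr_sumr centred mulr0 addr0 mulrC.
Qed.

Lemma cexpect_dev_sqr_le (S : {set T}) (f : T -> R) :
  0 < prob mu S -> prob mu S * (cexpect S f - expect f) ^+ 2 <= variance f.
Proof.
case: mu_prob => mu_ge0 _ pS.
have inS_le : \sum_(t in S) mu t * (f t - expect f) ^+ 2 <= variance f.
  rewrite /variance [leRHS](bigID (mem S)) /= lerDl.
  by apply: sumr_ge0 => t _; rewrite mulr_ge0 ?sqr_ge0.
apply: le_trans inS_le; rewrite sum_dev_sqr_cexpect // lerDr.
by apply: sumr_ge0 => t _; rewrite mulr_ge0 ?sqr_ge0.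
Qed.

End Moments.

Section Marginals.
Variables (R : realType) (Omega : finType) (n : nat).
Variable mu : {ffun config Omega n -> R}.
Hypothesis mu_prob : is_prob mu.

Lemma sum_cmarg1_mul (S : {set config Omega n}) (x : 'I_n) (F : Omega -> R) :
  \sum_w cmarg1 mu S x w * F w = cexpect mu S (fun s => F (s x)).
Proof.
rewrite -(sum_pushforward_mul _ (fun s : config Omega n => s x)).
by apply: eq_bigr => w _; rewrite ffunE.
Qed.

Lemma sum_cmarg_mul (k : nat) (S : {set config Omega n}) (xs : {ffun 'I_k -> 'I_n})
    (F : {ffun 'I_k -> Omega} -> R) :
  \sum_a cmarg mu S xs a * F a = cexpect mu S (fun s => F [ffun i => s (xs i)]).
Proof.
rewrite -(sum_pushforward_mul _ (fun s : config Omega n => [ffun i => s (xs i)])).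
apply: eq_bigr => a _; rewrite ffunE; congr (prob _ (_ :&: _) / _ * _).
apply/setP => s; rewrite !inE; apply/forallP/eqP => [eq_a|<- i]; last by rewrite ffunE.
by apply/ffunP => i; rewrite ffunE; apply/eqP.
Qed.

Lemma sqr_prod_ord2 (y : R) : y ^+ 2 = \prod_(i < 2) y.
Proof. by rewrite expr2 !big_ord_recl big_ord0 mulr1. Qed.

Definition linear_stat (g : 'I_n -> Omega -> R) (s : config Omega n) : R :=
  \sum_x g x (s x).

Lemma sum_tv_cmarg1 (S : {set config Omega n}) :
  let g x w := Num.sg (cmarg1 mu S x w - cmarg1 mu [set: config Omega n] x w) in
  2 * \sum_x tv (cmarg1 mu S x) (cmarg1 mu [set: config Omega n] x)
  = cexpect mu S (linear_stat g) - expect mu (linear_stat g).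
Proof.
move=> g; rewrite -(cexpect_setT mu_prob) !cexpect_sum -sumrB mulr_sumr.
apply: eq_bigr => x _; rewrite tv_sg -!sum_cmarg1_mul -sumrB.
by apply: eq_bigr => w _; rewrite mulrBl.
Qed.

Let pair_term (g : 'I_n -> Omega -> R) (xs : {ffun 'I_2 -> 'I_n})
    (a : {ffun 'I_2 -> Omega}) : R := \prod_(i < 2) g (xs i) (a i).

Lemma linear_stat_sqr (g : 'I_n -> Omega -> R) (s : config Omega n) :
  linear_stat g s ^+ 2 =
  \sum_(xs : {ffun 'I_2 -> 'I_n}) pair_term g xs [ffun i => s (xs i)].
Proof.
transitivity (\sum_(xs : {ffun 'I_2 -> 'I_n}) \prod_(i < 2) g (xs i) (s (xs i))).
  by rewrite sqr_prod_ord2 (bigA_distr_bigA (fun (_ : 'I_2) x => g x (s x))).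
by apply: eq_bigr => xs _; apply: eq_bigr => i _; rewrite ffunE.
Qed.

Lemma expect_linear_stat_sqr (g : 'I_n -> Omega -> R) :
  expect mu (fun s => linear_stat g s ^+ 2) =
  \sum_(xs : {ffun 'I_2 -> 'I_n}) \sum_a
     cmarg mu [set: config Omega n] xs a * pair_term g xs a.
Proof.
rewrite /expect; under eq_bigr do rewrite linear_stat_sqr mulr_sumr.
by rewrite exchange_big; apply: eq_bigr => xs _; rewrite sum_cmarg_mul cexpect_setT.
Qed.

Lemma sqr_expect_linear_stat (g : 'I_n -> Omega -> R) :
  expect mu (linear_stat g) ^+ 2 =
  \sum_(xs : {ffun 'I_2 -> 'I_n}) \sum_a
     cprod mu [set: config Omega n] xs a * pair_term g xs a.
Proof.
have -> : expect mu (linear_stat g) =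
    \sum_x \sum_w cmarg1 mu [set: config Omega n] x w * g x w.
  rewrite -(cexpect_setT mu_prob) cexpect_sum.
  by apply: eq_bigr => x _; rewrite sum_cmarg1_mul.
rewrite sqr_prod_ord2 (bigA_distr_bigA (fun (_ : 'I_2) x => _)) /=.
apply: eq_bigr => xs _.
rewrite (bigA_distr_bigA (fun (i : 'I_2) w => cmarg1 mu _ (xs i) w * g (xs i) w)) /=.
by apply: eq_bigr => a _; rewrite ffunE big_split.
Qed.

Lemma variance_linear_stat_le (g : 'I_n -> Omega -> R) :
  (forall x w, `|g x w| <= 1) ->
  variance mu (linear_stat g) <=
  2 * \sum_(xs : {ffun 'I_2 -> 'I_n})
        tv (cmarg mu [set: config Omega n] xs) (cprod mu [set: config Omega n] xs).
Proof.
move=> g_le1; rewrite variance_expect_sqr // expect_linear_stat_sqr.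
rewrite sqr_expect_linear_stat -sumrB mulr_sumr; apply: ler_sum => xs _.
rewrite -sumrB; under eq_bigr do rewrite -mulrBl.
apply: sum_diff_mul_le_tv => a; rewrite normr_prod.
by apply: prodr_ile1 => i _; rewrite normr_ge0 g_le1.
Qed.

End Marginals.

Theorem corollary2p4 (R : realType) (Omega : finType) (HOmega : (0 < #|Omega|)%N) :
  forall eps : R, 0 < eps ->
  exists gamma : R, 0 < gamma /\
  forall eta : R, 0 < eta ->
  exists delta : R, 0 < delta /\
  forall (n : nat), delta^-1 < n%:R ->
  forall mu : {ffun config Omega n -> R}, is_prob mu ->
  is_symmetric mu delta 2 ->
  forall S : {set config Omega n}, is_state mu S gamma 2 -> eta <= prob mu S ->
  (n%:R)^-1 * \sum_(x < n) tv (cmarg1 mu S x) (cmarg1 mu [set: config Omega n] x)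
    < eps.
Proof.
move=> eps eps_gt0; exists 1; split=> // eta eta_gt0.
have delta_gt0 : 0 < eta * eps ^+ 2 by rewrite mulr_gt0 ?exprn_gt0.
exists (eta * eps ^+ 2); split=> // n n_big mu mu_prob [_ mu_sym] S [pS_gt0 _] pS_ge.
have n_gt0 : 0 < n%:R :> R by apply: lt_trans n_big; rewrite invr_gt0.
set X := \sum_(x < n) _.
set Y := \sum_(xs : {ffun 'I_2 -> 'I_n}) _ in mu_sym.
have X_ge0 : 0 <= X.
  by apply: sumr_ge0 => x _; rewrite mulr_ge0 ?invr_ge0 ?sumr_ge0.
have XY : prob mu S * (2 * X) ^+ 2 <= 2 * Y.
  rewrite (sum_tv_cmarg1 mu_prob).
  apply: le_trans (cexpect_dev_sqr_le mu_prob _ pS_gt0) _.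
  apply: (variance_linear_stat_le mu_prob) => x w.
  by rewrite normr_sg; case: (_ != 0).
have Y_lt : Y < n%:R ^+ 2 * (eta * eps ^+ 2).
  by rewrite -ltr_pdivrMl ?exprn_gt0.
have sqr_lt : X ^+ 2 < (n%:R * eps) ^+ 2.
  have : eta * (4 * X ^+ 2) < eta * (2 * (n%:R * eps) ^+ 2).
    have -> : eta * (4 * X ^+ 2) = eta * (2 * X) ^+ 2 by ring.
    apply: le_lt_trans (ler_wpM2r (sqr_ge0 _) pS_ge) _; apply: le_lt_trans XY _.
    have -> : eta * (2 * (n%:R * eps) ^+ 2) = 2 * (n%:R ^+ 2 * (eta * eps ^+ 2)).
      by ring.
    by rewrite ltr_pM2l.
  rewrite ltr_pM2l //; have := sqr_ge0 (n%:R * eps); lra.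
have neps_ge0 : 0 <= n%:R * eps by rewrite mulr_ge0 ?ltW.
by rewrite ltr_pdivrMl // -(ltr_pXn2r (_ : 0 < 2)%N) ?nnegrE.
Qed.
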